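(* Let $R$ be a ring and let $S$ be a non-empty subset of $R$. For an ideal $\mathfrak{b}$ of $R$ write $(S+\mathfrak{b})/\mathfrak{b}$ for the image of $S$ in $R/\mathfrak{b}$. \begin{enumerate} \item If there exists an ideal $\mathfrak{b}$ of $R$ such that $(S+\mathfrak{b})/\mathfrak{b}\subseteq \mathcal{C}_{R/\mathfrak{b}}$, then there is a least ideal $\mathfrak{a}(S)$ of $R$ (with respect to inclusion) with this property. \item If there exists an ideal $\mathfrak{b}$ of $R$ such that $(S+\mathfrak{b})/\mathfrak{b}\subseteq {}'\mathcal{C}_{R/\mathfrak{b}}$, then there is a least ideal ${}'\mathfrak{a}(S)$ of $R$ with this property, and ${}'\mathfrak{a}(S)\subseteq \mathfrak{a}(S)$. \item If there exists an ideal $\mathfrak{b}$ of $R$ such that $(S+\mathfrak{b})/\mathfrak{b}\subseteq \mathcal{C}'_{R/\mathfrak{b}}$, then there is a least ideal $\mathfrak{a}'(S)$ of $R$ with this property, and $\mathfrak{a}'(S)\subseteq \mathfrak{a}(S)$. \end{enumerate}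
   Context: All rings are associative with $1$. For a ring $A$: ${}'\mathcal{C}_A=\{r\in A: xr=0\Rightarrow x=0 \text{ for } x\in A\}$ (left regular elements), $\mathcal{C}'_A=\{r\in A: rx=0\Rightarrow x=0\}$ (right regular elements), and $\mathcal{C}_A={}'\mathcal{C}_A\cap\mathcal{C}'_A$ (regular elements). *)

From HB Require Import structures.
From mathcomp Require Import all_boot all_order all_algebra.
Set Implicit Arguments. Unset Strict Implicit. Unset Printing Implicit Defensive.
Import GRing.Theory.
Local Open Scope ring_scope.

Definition is_ideal (R : pzRingType) (b : R -> Prop) : Prop :=
  [/\ b 0,
      (forall x y, b x -> b y -> b (x - y)),
      (forall a x, b x -> b (a * x)) &
      (forall a x, b x -> b (x * a))].

Definition subset_of (R : pzRingType) (a b : R -> Prop) : Prop :=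
  forall x, a x -> b x.

(* The class of r + b in R/b is left regular ('C_{R/b}):
   for every class x + b, (x + b)(r + b) = 0 + b  implies  x + b = 0 + b,
   i.e. x r \in b -> x \in b. *)
Definition lreg_mod (R : pzRingType) (b : R -> Prop) (r : R) : Prop :=
  forall x, b (x * r) -> b x.

Definition rreg_mod (R : pzRingType) (b : R -> Prop) (r : R) : Prop :=
  forall x, b (r * x) -> b x.

Definition reg_mod (R : pzRingType) (b : R -> Prop) (r : R) : Prop :=
  lreg_mod b r /\ rreg_mod b r.

(* (S + b)/b \subseteq 'C_{R/b}, C'_{R/b}, C_{R/b} respectively. *)
Definition img_lreg (R : pzRingType) (S b : R -> Prop) : Prop :=
  forall s, S s -> lreg_mod b s.
Definition img_rreg (R : pzRingType) (S b : R -> Prop) : Prop :=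
  forall s, S s -> rreg_mod b s.
Definition img_reg (R : pzRingType) (S b : R -> Prop) : Prop :=
  forall s, S s -> reg_mod b s.

Definition least_ideal (R : pzRingType) (P : (R -> Prop) -> Prop)
    (a : R -> Prop) : Prop :=
  [/\ is_ideal a, P a &
      forall b, is_ideal b -> P b -> subset_of a b].

From mathcomp Require Import all_boot all_order all_algebra.

Set Implicit Arguments.
Unset Strict Implicit.
Unset Printing Implicit Defensive.

(* Each of the three regularity conditions on the image of S is preserved
   under arbitrary intersections of ideals, so the intersection of all ideals
   satisfying it is the least one.  Such ideals always exist (R itself
   qualifies, R/R being the zero ring). *)

Section IdealMeet.
Variable R : pzRingType.
Implicit Types (F P Q : (R -> Prop) -> Prop) (S b : R -> Prop) (s : R).

Definition ideal_meet F : R -> Prop := fun x => forall b, F b -> b x.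

Lemma is_ideal_meet F : (forall b, F b -> is_ideal b) -> is_ideal (ideal_meet F).
Proof.
move=> idealF; split.
- by move=> b /idealF [].
- by move=> x y Fx Fy b Fb; have [_ subb _ _] := idealF b Fb; exact: subb (Fx b Fb) (Fy b Fb).
- by move=> a x Fx b Fb; have [_ _ mulb _] := idealF b Fb; exact: mulb (Fx b Fb).
- by move=> a x Fx b Fb; have [_ _ _ mulb] := idealF b Fb; exact: mulb (Fx b Fb).
Qed.

Definition meet_closed P : Prop :=
  forall F, (forall b, F b -> is_ideal b /\ P b) -> P (ideal_meet F).

Lemma least_ideal_meet P :
  meet_closed P -> least_ideal P (ideal_meet (fun b => is_ideal b /\ P b)).
Proof.
move=> meetP; split.
- by apply: is_ideal_meet => b [].
- exact: meetP.
- by move=> b idb Pb x; apply.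
Qed.

Lemma least_ideal_sub P Q a b :
  (forall c, is_ideal c -> Q c -> P c) ->
  least_ideal P a -> least_ideal Q b -> subset_of a b.
Proof. by move=> QP [_ _ leastA] [idB QB _]; apply: leastA => //; exact: QP. Qed.

Lemma lreg_mod_meet F s : (forall b, F b -> lreg_mod b s) -> lreg_mod (ideal_meet F) s.
Proof. by move=> regF x Fxs b Fb; exact: regF (Fxs b Fb). Qed.

Lemma rreg_mod_meet F s : (forall b, F b -> rreg_mod b s) -> rreg_mod (ideal_meet F) s.
Proof. by move=> regF x Fsx b Fb; exact: regF (Fsx b Fb). Qed.

Lemma img_lreg_meet_closed S : meet_closed (img_lreg S).
Proof. by move=> F FP s Ss; apply: lreg_mod_meet => b /FP[_]; apply. Qed.

Lemma img_rreg_meet_closed S : meet_closed (img_rreg S).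
Proof. by move=> F FP s Ss; apply: rreg_mod_meet => b /FP[_]; apply. Qed.

Lemma img_reg_meet_closed S : meet_closed (img_reg S).
Proof.
move=> F FP s Ss; split.
- by apply: lreg_mod_meet => b /FP[_ /(_ s Ss)[]].
- by apply: rreg_mod_meet => b /FP[_ /(_ s Ss)[]].
Qed.

Lemma img_reg_lreg S b : img_reg S b -> img_lreg S b.
Proof. by move=> regS s /regS[]. Qed.

Lemma img_reg_rreg S b : img_reg S b -> img_rreg S b.
Proof. by move=> regS s /regS[]. Qed.

End IdealMeet.

Theorem proposition1p1 (R : pzRingType) (S : R -> Prop) (S_ne : exists s, S s) :
  [/\ ((exists b, is_ideal b /\ img_reg S b) ->
         exists a, least_ideal (img_reg S) a),
      ((exists b, is_ideal b /\ img_lreg S b) ->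
         exists la, least_ideal (img_lreg S) la) /\
      (forall la a, least_ideal (img_lreg S) la ->
         least_ideal (img_reg S) a -> subset_of la a) &
      ((exists b, is_ideal b /\ img_rreg S b) ->
         exists ra, least_ideal (img_rreg S) ra) /\
      (forall ra a, least_ideal (img_rreg S) ra ->
         least_ideal (img_reg S) a -> subset_of ra a)].
Proof.
split; [|split|split].
- by move=> _; eexists; apply: least_ideal_meet; exact: img_reg_meet_closed.
- by move=> _; eexists; apply: least_ideal_meet; exact: img_lreg_meet_closed.
- by move=> la a; apply: least_ideal_sub => c _; exact: img_reg_lreg.
- by move=> _; eexists; apply: least_ideal_meet; exact: img_rreg_meet_closed.
- by move=> ra a; apply: least_ideal_sub => c _; exact: img_reg_rreg.
Qed.
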